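(* Let $m \geq 1$ be an integer and define $F(m,p) = \mathbb{P}_{X\sim B(m,p)}[X \geq mp] = \sum_{j=\lceil mp\rceil}^{m} \binom{m}{j} p^j (1-p)^{m-j}$ for $p \in [0,1]$. Then for every $k \in \{1, \ldots, m\}$, the function $p \mapsto F(m,p)$ is strictly increasing on the interval $\left(\frac{k-1}{m}, \frac{k}{m}\right]$.
   Context: $B(m,p)$ denotes the binomial distribution with $m$ trials and success probability $p$: $\mathbb{P}[X=j]=\binom{m}{j}p^j(1-p)^{m-j}$ for $j=0,\dots,m$; its mean is $mp$. *)

From Stdlib Require Import Reals Lra Lia.
Open Scope R_scope.

Definition binom_pmf (m j : nat) (p : R) : R :=
  C m j * p ^ j * (1 - p) ^ (m - j).

Definition F (m : nat) (p : R) : R :=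
  sum_f_R0 (fun j => if Rle_dec (INR m * p) (INR j) then binom_pmf m j p else 0) m.

From Stdlib Require Import Reals Lra Lia.
Open Scope R_scope.

(* For (k-1)/m < p <= k/m the threshold m p of F lies in
   (k-1, k], so the event X >= m p is exactly X >= k and F(m,p) is the upper
   tail T_k(p) = P[X >= k].  The tail is a polynomial in p whose derivative
   telescopes: writing a_i(p) = C(m,i) (m-i) p^i (1-p)^(m-i-1), the derivative
   of the pmf at j = i+1 is a_i - a_{i+1}, so T_k' = a_{k-1} - a_m = a_{k-1},
   which is positive on (0,1).  Hence T_k is strictly increasing on [0,1],
   and the theorem follows because ((k-1)/m, k/m] is contained in [0,1]. *)

Definition upper_tail (m k : nat) (p : R) : R :=
  sum_f_R0 (fun j => if Nat.leb k j then binom_pmf m j p else 0) m.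

Definition binom_pmf_deriv (m j : nat) (x : R) : R :=
  C m j * (INR j * x ^ pred j * (1 - x) ^ (m - j)
           - INR (m - j) * x ^ j * (1 - x) ^ pred (m - j)).

Lemma binom_pmf_derivable (m j : nat) (x : R) :
  derivable_pt_lim (binom_pmf m j) x (binom_pmf_deriv m j x).
Proof.
  pose (lead := mult_real_fct (C m j) (fun y => y ^ j)).
  pose (rest := comp (fun y => y ^ (m - j)) (minus_fct (fct_cte 1) id)).
  change (binom_pmf m j) with (mult_fct lead rest).
  replace (binom_pmf_deriv m j x) with
    (C m j * (INR j * x ^ pred j) * rest x
     + lead x * (INR (m - j) * (1 - x) ^ pred (m - j) * (0 - 1)))
    by (unfold binom_pmf_deriv, lead, rest, mult_real_fct, comp, minus_fct, fct_cte, id;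
        ring).
  apply derivable_pt_lim_mult.
  - apply derivable_pt_lim_scal, derivable_pt_lim_pow.
  - apply derivable_pt_lim_comp; [|apply derivable_pt_lim_pow].
    apply derivable_pt_lim_minus;
      [apply derivable_pt_lim_const | apply derivable_pt_lim_id].
Qed.

Lemma sum_f_R0_derivable (f : nat -> R -> R) (df : nat -> R) (x : R) (n : nat) :
  (forall j, derivable_pt_lim (f j) x (df j)) ->
  derivable_pt_lim (fun p => sum_f_R0 (fun j => f j p) n) x (sum_f_R0 df n).
Proof.
  intro Hf; induction n as [|n IH]; simpl; [apply Hf|].
  exact (derivable_pt_lim_plus _ (f (S n)) _ _ _ IH (Hf (S n))).
Qed.

(* The term a_i(x) = C(m,i) (m-i) x^i (1-x)^(m-i-1) through which the
   derivatives of the pmf telescope; note a_m = 0. *)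
Definition tail_flux (m i : nat) (x : R) : R :=
  C m i * INR (m - i) * x ^ i * (1 - x) ^ (m - S i).

Lemma binom_succ_mul (m i : nat) :
  (i < m)%nat -> C m (S i) * INR (S i) = C m i * INR (m - i).
Proof.
  intro Him. rewrite pascal_step3 by exact Him.
  assert (INR (S i) <> 0) by (apply not_0_INR; lia).
  field; assumption.
Qed.

Lemma binom_pmf_deriv_telescope (m i : nat) (x : R) :
  (i < m)%nat ->
  binom_pmf_deriv m (S i) x = tail_flux m i x - tail_flux m (S i) x.
Proof.
  intro Him. unfold binom_pmf_deriv, tail_flux.
  replace (m - S (S i))%nat with (pred (m - S i)) by lia.
  rewrite <- binom_succ_mul by exact Him.
  simpl pred; ring.
Qed.

Lemma truncated_telescope (d a : nat -> R) (k n : nat) :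
  (1 <= k)%nat ->
  (forall i, (i < n)%nat -> d (S i) = a i - a (S i)) ->
  sum_f_R0 (fun j => if Nat.leb k j then d j else 0) n
  = if Nat.leb k n then a (k - 1)%nat - a n else 0.
Proof.
  intros Hk Hd; induction n as [|n IH]; simpl.
  - destruct (Nat.leb_spec k 0); [lia | reflexivity].
  - rewrite IH by (intros i Hi; apply Hd; lia).
    rewrite (Hd n) by lia.
    destruct (Nat.leb_spec k n), (Nat.leb_spec k (S n)); try lia.
    + ring.
    + replace (k - 1)%nat with n by lia. ring.
    + ring.
Qed.

Lemma upper_tail_derivable (m k : nat) (x : R) :
  (1 <= k)%nat -> (k <= m)%nat ->
  derivable_pt_lim (upper_tail m k) x (tail_flux m (k - 1) x).
Proof.
  intros Hk Hkm.
  replace (tail_flux m (k - 1) x) with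
    (sum_f_R0 (fun j => if Nat.leb k j then binom_pmf_deriv m j x else 0) m).
  - apply (sum_f_R0_derivable (fun j p => if Nat.leb k j then binom_pmf m j p else 0)).
    intro j; destruct (Nat.leb k j);
      [apply binom_pmf_derivable | apply derivable_pt_lim_const].
  - rewrite (truncated_telescope _ (fun i => tail_flux m i x)) by
      first [lia | intros; apply binom_pmf_deriv_telescope; lia].
    destruct (Nat.leb_spec k m); [|lia].
    unfold tail_flux at 2. rewrite Nat.sub_diag. simpl INR. ring.
Qed.

Lemma C_pos (n i : nat) : 0 < C n i.
Proof.
  unfold C. apply Rdiv_lt_0_compat.
  - apply lt_0_INR, Factorial.lt_O_fact.
  - apply Rmult_lt_0_compat; apply lt_0_INR, Factorial.lt_O_fact.
Qed.

Lemma tail_flux_pos (m i : nat) (x : R) :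
  (i < m)%nat -> 0 < x < 1 -> 0 < tail_flux m i x.
Proof.
  intros Him Hx. unfold tail_flux.
  apply Rmult_lt_0_compat; [apply Rmult_lt_0_compat; [apply Rmult_lt_0_compat|]|].
  - apply C_pos.
  - apply lt_0_INR; lia.
  - apply pow_lt; lra.
  - apply pow_lt; lra.
Qed.

Lemma upper_tail_strictly_increasing (m k : nat) (p q : R) :
  (1 <= k)%nat -> (k <= m)%nat ->
  0 <= p -> p < q -> q <= 1 -> upper_tail m k p < upper_tail m k q.
Proof.
  intros Hk Hkm Hp Hpq Hq.
  pose (pr := fun x => exist _ (tail_flux m (k - 1) x) (upper_tail_derivable m k x Hk Hkm)
                       : derivable_pt (upper_tail m k) x).
  apply (derive_increasing_interv 0 1 (upper_tail m k) pr); try lra.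
  intros t Ht. apply tail_flux_pos; [lia | exact Ht].
Qed.

Lemma F_eq_upper_tail (m k : nat) (p : R) :
  INR k - 1 < INR m * p -> INR m * p <= INR k -> F m p = upper_tail m k p.
Proof.
  intros Hlo Hhi. unfold F, upper_tail. apply sum_eq; intros j _.
  destruct (Nat.leb_spec k j) as [Hkj | Hjk];
    destruct (Rle_dec (INR m * p) (INR j)) as [Hle | Hlt]; try reflexivity; exfalso.
  - apply Hlt. apply le_INR in Hkj. lra.
  - assert (Hsucc : INR (S j) <= INR k) by (apply le_INR; lia).
    rewrite S_INR in Hsucc. lra.
Qed.

Theorem mainTheorem3 (m : nat) (Hm : (1 <= m)%nat) (k : nat)
  (Hk1 : (1 <= k)%nat) (Hkm : (k <= m)%nat) :
  forall p q : R,
    (INR k - 1) / INR m < p -> p < q -> q <= INR k / INR m ->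
    F m p < F m q.
Proof.
  intros p q Hp Hpq Hq.
  assert (Hm0 : 0 < INR m) by (apply lt_0_INR; lia).
  assert (Hk : 1 <= INR k) by (apply (le_INR 1); lia).
  assert (Hkm' : INR k <= INR m) by (apply le_INR; lia).
  assert (Hlo : INR k - 1 < INR m * p).
  { replace (INR k - 1) with (INR m * ((INR k - 1) / INR m)) by (field; lra).
    apply Rmult_lt_compat_l; assumption. }
  assert (Hhi : INR m * q <= INR k).
  { replace (INR k) with (INR m * (INR k / INR m)) by (field; lra).
    apply Rmult_le_compat_l; lra. }
  rewrite (F_eq_upper_tail m k p), (F_eq_upper_tail m k q) by nra.
  apply upper_tail_strictly_increasing; try assumption; nra.
Qed.
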